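(* Let $r\geq 2$ and $d\geq 2$ be integers and let $\mathbf a=(a_1,\ldots,a_r)$ be a sequence of positive integers. For an integer $n\geq 0$ let $\mathbf p_{\mathbf a,d}(n)$ denote the number of integer tuples $(x_1,\ldots,x_r)$ with $\sum_{i=1}^r a_ix_i=n$, $x_i\geq 0$ and $x_i\equiv 0$ or $x_i\equiv 1\pmod d$ for all $i$. Write $d\mathbf a=(da_1,\ldots,da_r)$, $[r]=\{1,\ldots,r\}$, and for $J\subseteq[r]$ let $a_J=\sum_{i\in J}a_i$ (so $a_\emptyset=0$). Then for all $n\geq 0$, $$\mathbf p_{\mathbf a,d}(n)=\sum_{J\subseteq[r]}p_{d\mathbf a}(n-a_J),$$ and the polynomial part of $\mathbf p_{\mathbf a,d}$ satisfies $$P_{\mathbf a,d}(n)=\sum_{J\subseteq[r]}P_{d\mathbf a}(n-a_J).$$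
   Context: For a sequence $\mathbf b=(b_1,\ldots,b_r)$ of positive integers and an integer $m$, $p_{\mathbf b}(m)$ is the number of integer tuples $(y_1,\ldots,y_r)$ with $y_i\geq 0$ and $\sum_i b_iy_i=m$ (so $p_{\mathbf b}(m)=0$ for $m<0$). The polynomial part $P_{\mathbf b}(m)$ of $p_{\mathbf b}$ is the polynomial in $m$ given by the coefficient of $t^{-1}$ in the Laurent expansion at $t=0$ of $\dfrac{e^{mt}}{\prod_{i=1}^r(1-e^{-b_it})}$ (Sylvester's first wave). The polynomial part $P_{\mathbf a,d}(n)$ of $\mathbf p_{\mathbf a,d}$ is the coefficient of $t^{-1}$ in the Laurent expansion at $t=0$ of $e^{nt}\prod_{i=1}^r\dfrac{1+e^{-a_it}}{1-e^{-da_it}}$. *)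

From HB Require Import structures.
From mathcomp Require Import all_boot all_order all_algebra.
Set Implicit Arguments. Unset Strict Implicit. Unset Printing Implicit Defensive.
Import Order.TTheory GRing.Theory Num.Theory.
Local Open Scope ring_scope.

(* p_b(m): number of (y_1,..,y_r) in N^r with sum_i b_i y_i = m, and 0
   for m < 0.  Since all b_i are positive (standing assumption), every
   solution satisfies y_i <= m, so enumerating y_i in 'I_(m.+1) counts
   all solutions. *)
Definition pcount (r : nat) (b : 'I_r -> nat) (m : int) : nat :=
  match m with
  | Posz k => #|[set y : {ffun 'I_r -> 'I_k.+1} |
                 (\sum_(i < r) b i * y i)%N == k]|
  | Negz _ => 0%N
  end.

(* bold p_{a,d}(n): number of (x_1,..,x_r) in N^r with sum a_i x_i = n
   and x_i = 0 or 1 (mod d) for all i (again x_i <= n as a_i >= 1). *)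
Definition pad (r d : nat) (a : 'I_r -> nat) (n : nat) : nat :=
  #|[set x : {ffun 'I_r -> 'I_n.+1} |
      ((\sum_(i < r) a i * x i)%N == n) &&
      [forall i, ((x i %% d)%N == 0%N) || ((x i %% d)%N == 1%N)]]|.

(* Formal power series in t with coefficients in Q[m] = {poly rat}      *)
(* (the variable m of the polynomial part is the polynomial variable 'X) *)

Definition series := nat -> {poly rat}.

Definition sone : series := fun k => (k == 0%N)%:R.
Definition sadd (f g : series) : series := fun k => f k + g k.
Definition sopp (f : series) : series := fun k => - f k.
Definition smul (f g : series) : series :=
  fun k => \sum_(i < k.+1) f i * g (k - i)%N.
Definition spow (f : series) (j : nat) : series := iter j (smul f) sone.

Definition sexp (c : {poly rat}) : series :=
  fun k => (k`!%:R : rat)^-1 *: c ^+ k.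

(* f / t^v  (meaningful when the first v coefficients of f vanish) *)
Definition sshift (v : nat) (f : series) : series := fun k => f (k + v)%N.

(* inverse of a series whose constant coefficient c = f 0 is a unit:
   f = c (1 - V) with V_0 = 0, and f^{-1} = c^{-1} sum_j V^j. *)
Definition sinv (f : series) : series :=
  let c := f 0%N in
  let V : series := fun k => if k == 0%N then 0 else - (c^-1 * f k) in
  fun k => c^-1 * \sum_(j < k.+1) spow V j k.

(* Coefficient of t^{-1} in the Laurent expansion at t = 0 of N(t)/D(t),
   where D is a power series of order (t-adic valuation) exactly v:
   N/D = t^{-v} * N * (D/t^v)^{-1}. *)
Definition laurent_coef_m1 (N D : series) (v : nat) : {poly rat} :=
  if v is v'.+1 then smul N (sinv (sshift v D)) v' else 0.

(* prod_i (1 - e^{-b_i t}); it has order exactly r when all b_i > 0 *)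
Definition denom (r : nat) (b : 'I_r -> nat) : series :=
  \big[smul/sone]_(i < r) sadd sone (sopp (sexp (- ((b i)%:R)%:P))).

(* Polynomial part P_b(m): coefficient of t^{-1} of
   e^{m t} / prod_i (1 - e^{-b_i t}), evaluated at m (an element of Q[X];
   P_b itself is polypart r b 'X). *)
Definition polypart (r : nat) (b : 'I_r -> nat) (m : {poly rat}) : {poly rat} :=
  laurent_coef_m1 (sexp m) (denom b) r.

Definition polypart_ad (r d : nat) (a : 'I_r -> nat) (n : {poly rat})
  : {poly rat} :=
  laurent_coef_m1
    (smul (sexp n)
          (\big[smul/sone]_(i < r) sadd sone (sexp (- ((a i)%:R)%:P))))
    (denom (fun i => (d * a i)%N)) r.

(* A tuple x counted by [pad d a n] is determined by the set J of indices with
   x_i = 1 (mod d) together with the quotients y_i = x_i / d, and these satisfy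
   sum_i d a_i y_i = n - a_J; grouping the tuples by J gives the first identity.
   For the polynomial parts, e^{nt} prod_i (1 + e^{-a_i t}) = sum_J e^{(n - a_J) t}
   and the coefficient of t^{-1} is linear in the numerator.  The series identity
   is checked on truncations, which live in the ring {poly {poly rat}}, where the
   product can be expanded by distributivity. *)

From HB Require Import structures.
From mathcomp Require Import all_boot all_order all_algebra.
From mathcomp Require Import zify ring.
Import Order.TTheory GRing.Theory Num.Theory.
Set Implicit Arguments.
Unset Strict Implicit.

Lemma leq_sum_term (I : finType) (F : I -> nat) i : F i <= \sum_j F j.
Proof. by rewrite (bigD1 i) //= leq_addr. Qed.

Lemma modn_mulDb d y (b : bool) : 1 < d -> (d * y + b) %% d = b.
Proof. by move=> d_gt1; rewrite mulnC modnMDl modn_small //; case: b; lia. Qed.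

Lemma divn_eq_mod01 d m :
  (m %% d == 0) || (m %% d == 1) -> m = d * (m %/ d) + (m %% d == 1).
Proof.
by move=> h; rewrite {1}(divn_eq m d) mulnC; congr (_ + _); case/orP: h => /eqP ->.
Qed.

Section ResidueBlocks.

Variables (r d n : nat) (a : 'I_r -> nat) (J : {set 'I_r}).
Hypotheses (d_gt1 : 1 < d) (a_gt0 : forall i, 0 < a i).

Definition residue_block : {set {ffun 'I_r -> 'I_n.+1}} :=
  [set x : {ffun 'I_r -> 'I_n.+1} |
     [&& \sum_i a i * x i == n,
         [forall i, (x i %% d == 0) || (x i %% d == 1)]
       & [set i | x i %% d == 1] == J]].

Definition dilated_solutions k : {set {ffun 'I_r -> 'I_k.+1}} :=
  [set y : {ffun 'I_r -> 'I_k.+1} | \sum_i d * a i * y i == k].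

Lemma sum_mul_lift (y : 'I_r -> nat) :
  \sum_i a i * (d * y i + (i \in J)) = \sum_i d * a i * y i + \sum_(i in J) a i.
Proof.
rewrite [X in _ + X]big_mkcond -big_split /=; apply: eq_bigr => i _.
by rewrite mulnDr mulnCA mulnA; case: (i \in J); rewrite ?muln1 ?muln0.
Qed.

Lemma residue_block_decomp x i :
  x \in residue_block -> x i = d * (x i %/ d) + (i \in J) :> nat.
Proof.
rewrite inE => /and3P [_ /forallP x01 /eqP <-].
by rewrite inE -divn_eq_mod01.
Qed.

Lemma residue_block_sum x : x \in residue_block ->
  \sum_i d * a i * (x i %/ d) + \sum_(i in J) a i = n.
Proof.
move=> xB; rewrite -sum_mul_lift.
under eq_bigr => i _ do rewrite -(residue_block_decomp i xB).
by move: xB; rewrite inE => /and3P [/eqP].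
Qed.

Lemma residue_block0 : n < \sum_(i in J) a i -> residue_block = set0.
Proof.
move=> lt_n_aJ; apply/setP => x; rewrite in_set0; apply/negbTE/negP => xB.
by move: lt_n_aJ; rewrite -(residue_block_sum xB) ltnNge leq_addl.
Qed.

Section Lift.

Hypothesis aJ_le_n : \sum_(i in J) a i <= n.
Let k := n - \sum_(i in J) a i.

Definition lift_solution (y : {ffun 'I_r -> 'I_k.+1}) : {ffun 'I_r -> 'I_n.+1} :=
  [ffun i => inord (d * y i + (i \in J))].

Lemma lift_solution_bound y i :
  y \in dilated_solutions k -> d * y i + (i \in J) < n.+1.
Proof.
rewrite inE => /eqP sum_y; rewrite ltnS.
apply: leq_trans (leq_pmull _ (a_gt0 i)) _.
apply: leq_trans (leq_sum_term (fun j => a j * (d * y j + (j \in J))) i) _.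
by rewrite sum_mul_lift sum_y subnK.
Qed.

Lemma lift_solutionE y i : y \in dilated_solutions k ->
  lift_solution y i = d * y i + (i \in J) :> nat.
Proof. by move=> yS; rewrite ffunE inordK ?lift_solution_bound. Qed.

Lemma lift_solution_inj : {in dilated_solutions k &, injective lift_solution}.
Proof.
move=> y1 y2 y1S y2S /ffunP eq_lift; apply/ffunP => i; apply: val_inj.
move: (congr1 val (eq_lift i)) => /=.
rewrite !lift_solutionE // => /addIn /eqP.
by rewrite eqn_mul2l gtn_eqF ?(ltnW d_gt1) //= => /eqP.
Qed.

Lemma lift_solution_block y :
  y \in dilated_solutions k -> lift_solution y \in residue_block.
Proof.
move=> yS; have modE i : lift_solution y i %% d = (i \in J).
  by rewrite lift_solutionE // modn_mulDb.
rewrite inE; apply/and3P; split.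
- under eq_bigr => i _ do rewrite (lift_solutionE i yS).
  rewrite sum_mul_lift.
  by move: yS; rewrite inE => /eqP ->; rewrite subnK.
- by apply/forallP => i; rewrite modE; case: (i \in J).
- by apply/eqP/setP => i; rewrite inE modE; case: (i \in J).
Qed.

Lemma residue_block_lift x :
  x \in residue_block -> x \in lift_solution @: dilated_solutions k.
Proof.
move=> xB; have sum_q : \sum_i d * a i * (x i %/ d) = k.
  by apply/eqP; rewrite -(eqn_add2r (\sum_(i in J) a i)) subnK // residue_block_sum.
have q_lt i : x i %/ d < k.+1.
  rewrite ltnS -sum_q.
  apply: leq_trans (leq_sum_term (fun j => d * a j * (x j %/ d)) i).
  by rewrite leq_pmull // muln_gt0 a_gt0 andbT ltnW.
pose y : {ffun 'I_r -> 'I_k.+1} := [ffun i => inord (x i %/ d)].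
have yE i : y i = x i %/ d :> nat by rewrite ffunE inordK.
have yS : y \in dilated_solutions k.
  by rewrite inE; apply/eqP; rewrite -[RHS]sum_q; apply: eq_bigr => i _; rewrite yE.
apply/imsetP; exists y => //; apply/ffunP => i; apply: val_inj => /=.
by rewrite lift_solutionE // yE -residue_block_decomp.
Qed.

Lemma card_residue_block : #|residue_block| = #|dilated_solutions k|.
Proof.
rewrite -(card_in_imset lift_solution_inj); apply: eq_card => x.
apply/idP/idP; first exact: residue_block_lift.
by case/imsetP => y yS ->; apply: lift_solution_block.
Qed.

End Lift.

Lemma card_residue_block_pcount :
  #|residue_block| = pcount (fun i => d * a i) (n%:Z - (\sum_(i in J) a i)%:Z)%R.
Proof.
case: (leqP (\sum_(i in J) a i) n) => [aJ_le_n | lt_n_aJ].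
  by rewrite subzn // card_residue_block.
have -> : (n%:Z - (\sum_(i in J) a i)%:Z)%R = Negz (\sum_(i in J) a i - n).-1.
  by rewrite NegzE prednK ?subn_gt0 // -subzn ?opprB // ltnW.
by rewrite residue_block0 // cards0.
Qed.

End ResidueBlocks.

Lemma pad_residue_sum r d (a : 'I_r -> nat) n : 1 < d -> (forall i, 0 < a i) ->
  pad d a n = \sum_(J : {set 'I_r})
                pcount (fun i => d * a i) (n%:Z - (\sum_(i in J) a i)%:Z)%R.
Proof.
move=> d_gt1 a_gt0; rewrite /pad -sum1_card.
rewrite (partition_big (fun x : {ffun 'I_r -> 'I_n.+1} => [set i | x i %% d == 1]) xpredT) //=.
apply: eq_bigr => J _; rewrite -card_residue_block_pcount // -sum1_card.
by apply: eq_bigl => x; rewrite !inE andbA.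
Qed.

Local Open Scope ring_scope.

Lemma invf_fact_mul (R : numFieldType) k j : (j <= k)%N ->
  ((k - j)`!%:R : R)^-1 / j`!%:R = (k`!%:R)^-1 * 'C(k, j)%:R.
Proof.
move=> le_jk; rewrite -(bin_fact le_jk) !natrM.
have fact_neq0 m : (m`!%:R : R) != 0 by rewrite pnatr_eq0 -lt0n fact_gt0.
have bin_neq0 : ('C(k, j)%:R : R) != 0 by rewrite pnatr_eq0 -lt0n bin_gt0.
by field; rewrite !fact_neq0 bin_neq0.
Qed.

Lemma laurent_coef_m1_sum (I : finType) (N : series) (F : I -> series) D v :
  (forall k, N k = \sum_i F i k) ->
  laurent_coef_m1 N D v = \sum_i laurent_coef_m1 (F i) D v.
Proof.
case: v => [|v] NE /=; first by rewrite big1.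
by rewrite /smul exchange_big; apply: eq_bigr => k _; rewrite NE mulr_suml.
Qed.

Definition eq_upto (K : nat) (f g : series) := forall k, (k < K)%N -> f k = g k.

Definition coefs (p : {poly {poly rat}}) : series := fun k => p`_k.

Definition strunc (K : nat) (f : series) : {poly {poly rat}} := \poly_(k < K) f k.

Lemma strunc_eq_upto K f : eq_upto K f (coefs (strunc K f)).
Proof. by move=> k lt_kK; rewrite /coefs coef_poly lt_kK. Qed.

Lemma coefsM p q k : coefs (p * q) k = smul (coefs p) (coefs q) k.
Proof. exact: coefM. Qed.

Lemma eq_upto_smul K f f' g g' :
  eq_upto K f f' -> eq_upto K g g' -> eq_upto K (smul f g) (smul f' g').
Proof.
move=> eq_f eq_g k lt_kK; apply: eq_bigr => j _.
have le_jk := ltn_ord j; rewrite eq_f ?eq_g //; lia.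
Qed.

Lemma eq_upto_big_smul K (I : finType) (P : pred I) (F : I -> series) p :
  (forall i, eq_upto K (F i) (coefs (p i))) ->
  eq_upto K (\big[smul/sone]_(i | P i) F i) (coefs (\prod_(i | P i) p i)).
Proof.
move=> eq_F; apply: (big_ind2 (fun f q => eq_upto K f (coefs q))) => //.
  by move=> k _; rewrite /coefs coef1.
move=> f1 q1 f2 q2 eq1 eq2 k lt_kK.
by rewrite coefsM; apply: (eq_upto_smul eq1 eq2).
Qed.

Lemma smul_sexp c c' k : smul (sexp c) (sexp c') k = sexp (c + c') k.
Proof.
rewrite /sexp addrC exprDn scaler_sumr; apply: eq_bigr => j _.
have le_jk : (j <= k)%N by rewrite -ltnS.
rewrite -scalerAl -scalerAr scalerA -scaler_nat scalerA mulrC.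
by rewrite invf_fact_mul // [c' ^+ _ * _]mulrC.
Qed.

Lemma big_smul_sexp K (I : finType) (P : pred I) (c : I -> {poly rat}) :
  eq_upto K (\big[smul/sone]_(i | P i) sexp (c i)) (sexp (\sum_(i | P i) c i)).
Proof.
apply: (big_ind2 (fun f c => eq_upto K f (sexp c))) => //.
- by move=> k _; rewrite /sexp expr0n; case: k => [|k] /=; rewrite ?invr1 ?scale1r ?scaler0.
- move=> f1 c1 f2 c2 eq1 eq2 k lt_kK.
  by rewrite -smul_sexp; apply: (eq_upto_smul eq1 eq2).
Qed.

Lemma smul_sexp_prod1D (I : finType) (c : {poly rat}) (e : I -> {poly rat}) k :
  smul (sexp c) (\big[smul/sone]_i sadd sone (sexp (e i))) k =
  \sum_(J : {set I}) sexp (c + \sum_(i in J) e i) k.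
Proof.
have lt_kK : (k < k.+1)%N by [].
have prodE : eq_upto k.+1 (\big[smul/sone]_i sadd sone (sexp (e i)))
                          (coefs (\prod_i (strunc k.+1 (sexp (e i)) + 1))).
  apply: eq_upto_big_smul => i j lt_jK.
  by rewrite /coefs coefD coef1 coef_poly lt_jK addrC.
rewrite (eq_upto_smul (strunc_eq_upto (sexp c)) prodE) // -coefsM.
rewrite bigA_distr mulr_sumr /coefs coef_sum; apply: eq_bigr => J _.
rewrite -big_mkcond /= -/(coefs _ k) coefsM -smul_sexp.
have sumE : eq_upto k.+1 (sexp (\sum_(i in J) e i))
                         (coefs (\prod_(i in J) strunc k.+1 (sexp (e i)))).
  move=> j lt_jK; rewrite -(big_smul_sexp _ _ lt_jK).
  by apply: eq_upto_big_smul lt_jK => i; apply: strunc_eq_upto.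
by rewrite (eq_upto_smul (strunc_eq_upto (sexp c)) sumE).
Qed.

Lemma polypart_ad_sum r d (a : 'I_r -> nat) :
  polypart_ad d a 'X =
  \sum_(J : {set 'I_r})
     polypart (fun i => (d * a i)%N) ('X - ((\sum_(i in J) a i)%N%:R)%:P).
Proof.
apply: laurent_coef_m1_sum => k; rewrite smul_sexp_prod1D.
by apply: eq_bigr => J _; rewrite natr_sum rmorph_sum -sumrN.
Qed.

Theorem proposition2p2 (r d : nat) (a : 'I_r -> nat)
  (hr : (2 <= r)%N) (hd : (2 <= d)%N) (ha : forall i, (0 < a i)%N) :
  (forall n : nat,
     pad d a n =
     (\sum_(J : {set 'I_r})
        pcount (fun i => (d * a i)%N)
               (n%:Z - (\sum_(i in J) a i)%N%:Z))%N)
  /\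
  polypart_ad d a 'X =
  \sum_(J : {set 'I_r})
     polypart (fun i => (d * a i)%N) ('X - ((\sum_(i in J) a i)%N%:R)%:P).
Proof.
split; last exact: polypart_ad_sum.
by move=> n; apply: pad_residue_sum.
Qed.
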